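(* (a) (Block 3.) Let $E/F$ be a degree-4 datum, with notation $\rho,\zeta,v,u,L,\theta$ as below, and let $\xi_\alpha,\xi_\beta,\xi_\gamma\in\mathbb Z/2\mathbb Z$ with $\xi_\alpha+\xi_\beta+\xi_\gamma=0$. Let $Q$ be the quiver with vertices $1,2,3$ and arrows $\alpha:2\to1$, $\beta:3\to2$, $\gamma:1\to3$, with fields $F_1=E$, $F_2=F_3=L$, and bimodules $A_\alpha=E^{\theta^{\xi_\alpha}}\otimes_LL$, $A_\beta=L^{\theta^{\xi_\beta}}\otimes_LL$, $A_\gamma=L^{\theta^{\xi_\gamma}}\otimes_LE$. Let $\Lambda'=T_R(A)/\langle\alpha\beta,\beta\gamma,\gamma\alpha\rangle$. Let $\widehat Q$ be $Q$ with an extra loop $s_1$ at vertex $1$, let $K=L$, $\sigma_a=\theta^{\xi_a}$ for $a\in\{\alpha,\beta,\gamma\}$, $\sigma_{s_1}=1_L$, and $\Lambda=L_{\boldsymbol\sigma}\widehat Q/\langle \alpha\beta,\beta\gamma,\gamma\alpha,\,s_1^2-ue_1\rangle$. Then $\Lambda'\cong\Lambda$ as $F$-algebras. (b) (Block 9.) Let $L/F$ be a degree-2 datum. Let $Q$ be as in (a) with fields $F_1=L$, $F_2=F_3=F$ and bimodules $A_\alpha=L\otimes_FF$, $A_\beta=F\otimes_FF$, $A_\gamma=F\otimes_FL$, and let $\Lambda'=T_R(A)/\langle\alpha\beta,\beta\gamma,\gamma\alpha\rangle$. Let $\widehat Q$ be $Q$ with an extra loop $s_1$ at $1$, $K=F$,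 all $\sigma$'s equal to $1_F$, and $\Lambda=F\widehat Q/\langle\alpha\beta,\beta\gamma,\gamma\alpha,\,s_1^2-u^2e_1\rangle$. Then $\Lambda'\cong\Lambda$ as $F$-algebras.
   Context: Degree-2 datum: a degree-2 field extension $L/F$ with $\operatorname{char}F\neq2$; $\theta$ denotes the nontrivial element of $\operatorname{Gal}(L/F)$ and $u\in L\setminus\{0\}$ satisfies $\theta(u)=-u$ (so $u^2\in F$). Degree-4 datum: a cyclic Galois extension $E/F$ of degree 4 with $F$ containing a primitive 4th root of unity $\zeta$; $\rho$ is a generator of $\operatorname{Gal}(E/F)$, $v\in E\setminus\{0\}$ satisfies $\rho(v)=\zeta v$, $u:=v^2$, $L:=F(u)$ is the unique intermediate field with $[L:F]=2$, and $\theta:=\rho|_L$ generates $\operatorname{Gal}(L/F)$ (so $\theta(u)=-u$). Twisted bimodules: for fields $K'''\subseteq K',K''$ and an automorphism $g$ of $K'''$, $K'^{g}\otimes_{K'''}K''$ is the $K'$-$K''$-bimodule where $K'^g$ is $K'$ with left multiplication and right action $m\star z=m\,g(z)$ ($z\in K'''$). Tensor ring of a species: for a quiver $Q$ with fields $F_i$ at vertices and for each arrow $a:t(a)\to h(a)$ a bimodule $A_a=F_{h(a)}^{g_a}\otimes_{F_{h(a)}\cap F_{t(a)}}F_{t(a)}$, put $R=\prod_iF_i$ (with primitive idempotents $e_i$), $A=\bigoplus_aA_a$ (an $R$-$R$-bimodule) and $T_R(A)=\bigoplus_{n\ge0}A^{\otimes_Rn}$. The symbol $a$ denotes the element $1\otimes1\in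 A_a$; products of arrows are written right-to-left ($ab$ means $b$ followed by $a$, defined when $h(b)=t(a)$); one has $az=g_a(z)a$ for $z\in F_{h(a)}\cap F_{t(a)}$, and field elements written next to arrows are elements of $F_i\subseteq R$ at the appropriate vertex. $\langle X\rangle$ denotes the two-sided ideal generated by $X$. Semilinear path algebra: for a quiver $\widehat Q$, a field $K$ and automorphisms $\sigma_b\in\operatorname{Gal}(K/F)$ for $b\in\widehat Q_1$, $K_{\boldsymbol\sigma}\widehat Q$ is the tensor ring over $S=\prod_{i\in\widehat Q_0}K$ of the $S$-$S$-bimodule $\bigoplus_b K^{\sigma_b}\otimes_KK$; equivalently the ring generated by $S$ and the arrows $b=e_{h(b)}be_{t(b)}$ subject to $b\lambda=\sigma_b(\lambda)b$ for $\lambda\in K$. When all $\sigma_b$ are trivial this is the ordinary path algebra $K\widehat Q$. *)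

From HB Require Import structures.
From mathcomp Require Import all_boot all_order all_algebra all_fingroup all_field.
From mathcomp Require Import monalg.

Set Implicit Arguments.
Unset Strict Implicit.
Unset Printing Implicit Defensive.

Import GRing.Theory.
Local Open Scope ring_scope.

Definition FreeAlg (F : fieldType) (G : choiceType) : lalgType F :=
  monalg.malg (monalg.fmonom G) F.

Definition fgen (F : fieldType) (G : choiceType) (g : G) : FreeAlg F G :=
  monalg.mkmalgU (monalg.fmu g) 1.

Definition ideal_gen (F : fieldType) (A : lalgType F) (S : A -> Prop) (x : A)
  : Prop :=
  exists n (a s b : 'I_n -> A),
    (forall i, S (s i)) /\ x = \sum_(i < n) a i * s i * b i.

(* Since A and B are free, every F-algebra morphism A/<SA> -> B/<SB> lifts
   to an F-algebra morphism A -> B; so an isomorphism of the quotients is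
   exactly given by a pair of morphisms of the free algebras preserving the
   ideals and inverse to each other modulo the ideals. *)
Definition quot_alg_iso (F : fieldType) (A B : lalgType F)
  (SA : A -> Prop) (SB : B -> Prop) : Prop :=
  exists (f : {lrmorphism A -> B}) (g : {lrmorphism B -> A}),
    [/\ forall x, ideal_gen SA x -> ideal_gen SB (f x),
        forall y, ideal_gen SB y -> ideal_gen SA (g y),
        forall x, ideal_gen SA (g (f x) - x)
      & forall y, ideal_gen SB (f (g y) - y)].

(* Tensor ring T_R(A) of a species, R = prod_i F_i, A = (+)_a A_a with  *)
(* A_a = F_{h(a)}^{g_a} (x)_{F_{h(a)} cap F_{t(a)}} F_{t(a)}.          *)
(* All vertex fields F_i are subfields of a common field extension E  *)
(* of F.  T_R(A) is the F-algebra generated by the elements of the      *)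
(* F_i (at vertex i) and the arrows a, subject to: each F_i -> T_R(A)   *)
(* is an F-algebra map onto a corner with unit e_i, the e_i are         *)
(* orthogonal idempotents with sum 1, a = e_h(a) a e_t(a), and          *)
(* a z = g_a(z) a for z in F_h(a) cap F_t(a).                           *)

Section Species.
Variables (F : fieldType) (E : fieldExtType F) (V : finType) (Ar : choiceType).
Variables (Fv : V -> {subfield E}) (hd tl : Ar -> V) (tw : Ar -> E -> E).

Definition vgen := {x : V * E | x.2 \in Fv x.1}.
Definition spgen : choiceType := (vgen + Ar)%type.
Definition spalg : lalgType F := FreeAlg F spgen.

Definition sp_fld (i : V) (l : E) : spalg :=
  if insub (i, l) is Some x then fgen F (inl x : spgen) else 0.
Definition sp_e (i : V) : spalg := sp_fld i 1.
Definition sp_arr (a : Ar) : spalg := fgen F (inr a : spgen).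

Definition species_rel (r : spalg) : Prop :=
     (exists i l m, [/\ l \in Fv i, m \in Fv i &
         r = sp_fld i (l + m) - (sp_fld i l + sp_fld i m)])
  \/ (exists i l m, [/\ l \in Fv i, m \in Fv i &
         r = sp_fld i (l * m) - sp_fld i l * sp_fld i m])
  \/ (exists i (c : F), r = sp_fld i (c%:A) - c *: sp_e i)
  \/ (r = \sum_(i : V) sp_e i - 1)
  \/ (exists i j, i != j /\ r = sp_e i * sp_e j)
  \/ (exists a, r = sp_arr a - sp_e (hd a) * sp_arr a * sp_e (tl a))
  \/ (exists a z, z \in (Fv (hd a) :&: Fv (tl a))%VS /\
         r = sp_arr a * sp_fld (tl a) z - sp_fld (hd a) (tw a z) * sp_arr a).

Definition pres_rel (X : spalg -> Prop) (r : spalg) : Prop :=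
  species_rel r \/ X r.

End Species.

Arguments spalg {F E V} Ar Fv.
Arguments sp_fld {F E V Ar} Fv i l.
Arguments sp_e {F E V Ar} Fv i.
Arguments sp_arr {F E V Ar} Fv a.
Arguments species_rel {F E V Ar} Fv hd tl tw r.
Arguments pres_rel {F E V Ar} Fv hd tl tw X r.

(* The quivers Q (vertices 1,2,3 = ords 0,1,2; arrows alpha,beta,gamma *)
(* = ords 0,1,2) and Qhat = Q plus a loop s1 (= ord 3) at vertex 1.    *)
Definition vx1 : 'I_3 := inord 0.
Definition vx2 : 'I_3 := inord 1.
Definition vx3 : 'I_3 := inord 2.

Definition Q_hd (a : 'I_3) : 'I_3 :=
  match val a with 0%N => vx1 | 1%N => vx2 | _ => vx3 end.
Definition Q_tl (a : 'I_3) : 'I_3 :=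
  match val a with 0%N => vx2 | 1%N => vx3 | _ => vx1 end.
Definition Q_alpha : 'I_3 := inord 0.
Definition Q_beta : 'I_3 := inord 1.
Definition Q_gamma : 'I_3 := inord 2.

Definition Qh_hd (b : 'I_4) : 'I_3 :=
  match val b with 0%N => vx1 | 1%N => vx2 | 2%N => vx3 | _ => vx1 end.
Definition Qh_tl (b : 'I_4) : 'I_3 :=
  match val b with 0%N => vx2 | 1%N => vx3 | 2%N => vx1 | _ => vx1 end.
Definition Qh_alpha : 'I_4 := inord 0.
Definition Qh_beta : 'I_4 := inord 1.
Definition Qh_gamma : 'I_4 := inord 2.
Definition Qh_s1 : 'I_4 := inord 3.

Definition Q_paths (F : fieldType) (E : fieldExtType F)
  (Fv : 'I_3 -> {subfield E}) (r : spalg 'I_3 Fv) : Prop :=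
  r = sp_arr Fv Q_alpha * sp_arr Fv Q_beta \/
  r = sp_arr Fv Q_beta * sp_arr Fv Q_gamma \/
  r = sp_arr Fv Q_gamma * sp_arr Fv Q_alpha.

Definition Qh_rels (F : fieldType) (E : fieldExtType F)
  (Fv : 'I_3 -> {subfield E}) (w : E) (r : spalg 'I_4 Fv) : Prop :=
  r = sp_arr Fv Qh_alpha * sp_arr Fv Qh_beta \/
  r = sp_arr Fv Qh_beta * sp_arr Fv Qh_gamma \/
  r = sp_arr Fv Qh_gamma * sp_arr Fv Qh_alpha \/
  r = sp_arr Fv Qh_s1 * sp_arr Fv Qh_s1 - sp_fld Fv vx1 w.
Arguments Q_paths {F E} Fv r.
Arguments Qh_rels {F E} Fv w r.

(* At vertex 1 the field E is a quadratic extension K(v) of the field K sitting at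
   the other vertices, with v^2 in K.  Writing an element of E as a + b v (a, b in K),
   the generator a + b v at vertex 1 is sent to a e_1 + b s_1, and the loop s_1 is sent
   back to v at vertex 1.  The relations s_1 z = z s_1 (z in K) and s_1^2 = v^2 e_1 are
   exactly what makes the first assignment multiplicative on E.  Both algebras are
   quotients of free algebras, so these assignments on generators extend to morphisms
   that respect the relations and are inverse to each other modulo them.
   Block 3 is the case K = F(v^2) inside the cyclic quartic extension E (v is not in K
   because rho^2 fixes K and negates v); block 9 is the case K = F, v = u. *)

From HB Require Import structures.
From mathcomp Require Import all_boot all_order all_algebra all_fingroup all_field.
From mathcomp Require Import monalg.
From mathcomp Require Import ring.
From Stdlib Require Import Setoid Morphisms.

Set Implicit Arguments.
Unset Strict Implicit.
Unset Printing Implicit Defensive.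

Import GRing.Theory.
Local Open Scope ring_scope.

Section FreeAlgebra.
Variables (F : fieldType) (G : choiceType).
Local Notation A := (FreeAlg F G).

Lemma freealg_mul_malgC (c : F) (x : A) : x * (c%:MP : A) = (c%:MP : A) * x.
Proof.
rewrite [x]monalgE big_distrl big_distrr /=; apply: eq_bigr => k _.
by rewrite !malgM_def !(@fgmulUU _ F) mulm1 mul1m mulrC.
Qed.

Lemma freealg_monomZ (c : F) (m : fmonom G) : (<< c *g m >> : A) = c *: << m >>.
Proof. by apply/malgP => k; rewrite mcoeffZ !mcoeffU mulr_natr. Qed.

Lemma freealg_ind (P : A -> Prop) :
    P 1 -> (forall g, P (fgen F g)) ->
    (forall x y, P x -> P y -> P (x * y)) ->
    (forall x y, P x -> P y -> P (x + y)) ->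
    (forall c x, P x -> P (c *: x)) ->
  forall x, P x.
Proof.
move=> P1 Pgen PM PD PZ x; have P0 : P 0 by rewrite -(scale0r 1); apply: PZ.
rewrite [x]monalgE; elim: (finmap.enum_fset _) => [|k s IH]; rewrite ?big_nil //.
rewrite big_cons; apply: PD => //; rewrite freealg_monomZ; apply: PZ.
case: k => m; elim: m => [|g m IHm].
  by have -> : FMonom [::] = mone :> fmonom G by apply: val_inj; rewrite /= fm1.
have -> : FMonom (g :: m) = mmul (fmu g) (FMonom m).
  by apply: val_inj; rewrite /= fmM fmU.
have -> : << mmul (fmu g) (FMonom m) >> = << fmu g >> * << FMonom m >> :> A.
  by rewrite malgM_def fgmulUU mulr1.
by apply: PM => //; apply: Pgen.
Qed.

End FreeAlgebra.

Section FreeAlgebraLift.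
Variables (F : fieldType) (G H : choiceType) (phi : G -> FreeAlg F H).
Local Notation A := (FreeAlg F G).

Definition lift_monom (m : fmonom G) : FreeAlg F H := \prod_(g <- m : seq G) phi g.

Lemma lift_monom_mmorph : mmorphism lift_monom.
Proof. by split=> [m1 m2|]; rewrite /lift_monom ?fmM ?fm1 ?big_cat ?big_nil. Qed.
HB.instance Definition _ :=
  monalg.isMultiplicative.Build (fmonom G) _ lift_monom lift_monom_mmorph.

Definition lift_fun (x : A) : FreeAlg F H := mmap (@malgC _ F) lift_monom x.

Lemma lift_fun_zmod : zmod_morphism lift_fun.
Proof. by move=> x y; rewrite /lift_fun raddfB. Qed.

Lemma lift_fun_monoid : monoid_morphism lift_fun.
Proof.
have [lift_funM lift_fun1] : {morph lift_fun : x y / x * y} * (lift_fun 1 = 1).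
  by apply: commr_mmap_is_multiplicative => g m m'; rewrite /GRing.comm /= freealg_mul_malgC.
by split.
Qed.

Lemma lift_fun_scalable : scalable lift_fun.
Proof. by move=> c x; rewrite /lift_fun mmapZ /= mul_malgC. Qed.

HB.instance Definition _ := GRing.isZmodMorphism.Build _ _ lift_fun lift_fun_zmod.
HB.instance Definition _ := GRing.isMonoidMorphism.Build _ _ lift_fun lift_fun_monoid.
HB.instance Definition _ :=
  GRing.isScalable.Build F _ _ *:%R lift_fun lift_fun_scalable.

Definition freealg_lift : {lrmorphism A -> FreeAlg F H} := lift_fun.

Lemma freealg_lift_gen g : freealg_lift (fgen F g) = phi g.
Proof. by rewrite /= /lift_fun /fgen mmapU mul1r /lift_monom fmU big_seq1. Qed.

End FreeAlgebraLift.

Section IdealGen.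
Variables (F : fieldType) (A : lalgType F) (S : A -> Prop).
Local Notation I := (ideal_gen S).

Lemma ideal_gen0 : I 0.
Proof.
exists 0%N, (fun _ => 0), (fun _ => 0), (fun _ => 0).
by split=> [[]|]; rewrite ?big_ord0.
Qed.

Lemma ideal_genS s : S s -> I s.
Proof.
move=> Ss; exists 1%N, (fun _ => 1), (fun _ => s), (fun _ => 1).
by rewrite big_ord1 mul1r mulr1.
Qed.

Lemma ideal_genD x y : I x -> I y -> I (x + y).
Proof.
move=> [n [a [s [b [Ss ->]]]]] [m [a' [s' [b' [Ss' ->]]]]].
pose cat (f f' : 'I__ -> A) (i : 'I_(n + m)) :=
  match split i with inl j => f j | inr j => f' j end.
exists (n + m)%N, (cat a a'), (cat s s'), (cat b b'); split.
  by move=> i; rewrite /cat; case: (split i).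
by rewrite big_split_ord /cat; congr (_ + _); apply: eq_bigr => i _;
  rewrite ?(unsplitK (inl i)) ?(unsplitK (inr i)).
Qed.

Lemma ideal_genMl z x : I x -> I (z * x).
Proof.
move=> [n [a [s [b [Ss ->]]]]]; exists n, (fun i => z * a i), s, b; split => //.
by rewrite mulr_sumr; apply: eq_bigr => i _; rewrite !mulrA.
Qed.

Lemma ideal_genMr x z : I x -> I (x * z).
Proof.
move=> [n [a [s [b [Ss ->]]]]]; exists n, a, s, (fun i => b i * z); split => //.
by rewrite mulr_suml; apply: eq_bigr => i _; rewrite !mulrA.
Qed.

Lemma ideal_genZ c x : I x -> I (c *: x).
Proof. by move=> Ix; rewrite -[x]mul1r scalerAl; apply: ideal_genMl. Qed.

Lemma ideal_genN x : I x -> I (- x).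
Proof. by rewrite -scaleN1r; apply: ideal_genZ. Qed.

Lemma ideal_gen_sum (J : Type) (r : seq J) (P : pred J) (f : J -> A) :
  (forall j, P j -> I (f j)) -> I (\sum_(j <- r | P j) f j).
Proof.
move=> If; elim/big_rec: _ => [|j y Pj Iy]; first exact: ideal_gen0.
by apply: ideal_genD => //; apply: If.
Qed.

Definition eqv_mod (x y : A) : Prop := I (x - y).
Local Notation "x === y" := (eqv_mod x y) (at level 70).

Lemma eqv_mod_eq x y : x = y -> x === y.
Proof. by move=> ->; rewrite /eqv_mod subrr; apply: ideal_gen0. Qed.

Lemma eqv_mod0 x : x === 0 <-> I x.
Proof. by rewrite /eqv_mod subr0. Qed.

Lemma eqv_mod_equiv : Equivalence eqv_mod.
Proof.
split=> [x | x y | x y z]; rewrite /eqv_mod.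
- by rewrite subrr; apply: ideal_gen0.
- by move/ideal_genN; rewrite opprB.
- by move=> Ixy /(ideal_genD Ixy); rewrite addrA subrK.
Qed.

Lemma eqv_modD : Proper (eqv_mod ==> eqv_mod ==> eqv_mod) +%R.
Proof.
by move=> x x' Ix y y' Iy; rewrite /eqv_mod opprD addrACA; apply: ideal_genD.
Qed.

Lemma eqv_modM : Proper (eqv_mod ==> eqv_mod ==> eqv_mod) *%R.
Proof.
move=> x x' Ix y y' Iy; rewrite /eqv_mod.
have -> : x * y - x' * y' = (x - x') * y + x' * (y - y').
  by rewrite mulrBl mulrBr addrA subrK.
by apply: ideal_genD; [apply: ideal_genMr | apply: ideal_genMl].
Qed.

Lemma eqv_modZ c : Proper (eqv_mod ==> eqv_mod) ( *:%R c).
Proof. by move=> x x'; rewrite /eqv_mod -scalerBr; apply: ideal_genZ. Qed.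

Lemma eqv_mod_sum (J : Type) (r : seq J) (P : pred J) (f f' : J -> A) :
    (forall j, P j -> f j === f' j) ->
  \sum_(j <- r | P j) f j === \sum_(j <- r | P j) f' j.
Proof. by move=> ff'; rewrite /eqv_mod -sumrB; apply: ideal_gen_sum. Qed.

#[local] Existing Instances eqv_mod_equiv eqv_modD eqv_modM eqv_modZ.

Lemma eqv_mod_sqr_mul (x y x' y' t w : A) :
    t * x' === x' * t -> t * y' === y' * t -> t * t === w ->
  (x + y * t) * (x' + y' * t) === x * x' + y * y' * w + (x * y' + y * x') * t.
Proof.
move=> tx' ty' tt.
have -> : (x + y * t) * (x' + y' * t) =
    x * x' + y * (t * x') + (x * y' * t + y * (t * y') * t).
  by rewrite mulrDr !mulrDl !mulrA.
rewrite tx' ty'.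
have -> : y * (y' * t) * t = y * y' * (t * t) by rewrite !mulrA.
rewrite tt; apply: eqv_mod_eq.
by rewrite mulrDl !mulrA addrACA [RHS]addrACA; congr (_ + _); apply: addrC.
Qed.

End IdealGen.

#[export] Existing Instances eqv_mod_equiv eqv_modD eqv_modM eqv_modZ.
(* Rewriting in a whole congruence goal makes Coq compare unrelated elements of the
   free algebras up to conversion, which can take minutes; these patterns confine a
   rewrite to one side. *)
Notation eqvLHS := (X in eqv_mod _ X _)%pattern.
Notation eqvRHS := (X in eqv_mod _ _ X)%pattern.
#[export] Hint Extern 0 (eqv_mod _ _ _) => reflexivity : core.

Lemma ideal_gen_rmorph (F : fieldType) (A B : lalgType F)
    (SA : A -> Prop) (SB : B -> Prop) (f : {rmorphism A -> B}) :
    (forall s, SA s -> ideal_gen SB (f s)) ->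
  forall x, ideal_gen SA x -> ideal_gen SB (f x).
Proof.
move=> fS x [n [a [s [b [Ss ->]]]]]; rewrite rmorph_sum; apply: ideal_gen_sum => i _.
by rewrite !rmorphM; apply: ideal_genMr; apply: ideal_genMl; apply: fS.
Qed.

Lemma eqv_mod_freealg_id (F : fieldType) (G : choiceType) (S : FreeAlg F G -> Prop)
    (h : {lrmorphism FreeAlg F G -> FreeAlg F G}) :
    (forall g, eqv_mod S (h (fgen F g)) (fgen F g)) ->
  forall x, eqv_mod S (h x) x.
Proof.
move=> hg; apply: freealg_ind => [|//|x y hx hy|x y hx hy|c x hx].
- by rewrite rmorph1.
- by rewrite rmorphM; apply: eqv_modM.
- by rewrite rmorphD; apply: eqv_modD.
- by rewrite linearZ; apply: eqv_modZ.
Qed.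

Section SpeciesRelations.
Variables (F : fieldType) (E : fieldExtType F) (V : finType) (Ar : choiceType).
Variables (Fv : V -> {subfield E}) (hd tl : Ar -> V) (tw : Ar -> E -> E).
Variable X : spalg Ar Fv -> Prop.
Local Notation "x === y" := (eqv_mod (pres_rel Fv hd tl tw X) x y) (at level 70).
Local Notation fld := (sp_fld Fv).
Local Notation e := (sp_e Fv).
Local Notation arr := (sp_arr Fv).

Lemma sp_fldD i l m : l \in Fv i -> m \in Fv i -> fld i (l + m) === fld i l + fld i m.
Proof. by move=> Fl Fm; apply: ideal_genS; left; left; exists i, l, m. Qed.

Lemma sp_fldM i l m : l \in Fv i -> m \in Fv i -> fld i (l * m) === fld i l * fld i m.
Proof. by move=> Fl Fm; apply: ideal_genS; left; right; left; exists i, l, m. Qed.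

Lemma sp_fld_alg i (c : F) : fld i c%:A === c *: e i.
Proof. by apply: ideal_genS; left; do 2 right; left; exists i, c. Qed.

Lemma sp_sum_idem : \sum_i e i === 1.
Proof. by apply: ideal_genS; left; do 3 right; left. Qed.

Lemma sp_idem_orth i j : i != j -> e i * e j === 0.
Proof. by move=> ij; apply/eqv_mod0/ideal_genS; left; do 4 right; left; exists i, j. Qed.

Lemma sp_arr_idem a : arr a === e (hd a) * arr a * e (tl a).
Proof. by apply: ideal_genS; left; do 5 right; left; exists a. Qed.

Lemma sp_arr_twist a z : z \in (Fv (hd a) :&: Fv (tl a))%VS ->
  arr a * fld (tl a) z === fld (hd a) (tw a z) * arr a.
Proof. by move=> Fz; apply: ideal_genS; left; do 6 right; exists a, z. Qed.

Lemma sp_fld0 i : fld i 0 === 0.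
Proof.
have := sp_fldD (mem0v (Fv i)) (mem0v (Fv i)).
by rewrite addr0 /eqv_mod opprD addrA subrr add0r => /ideal_genN; rewrite opprK => /eqv_mod0.
Qed.

Lemma sp_idemM i : e i * e i === e i.
Proof. by rewrite -sp_fldM ?mem1v ?mulr1. Qed.

Lemma sp_idem_fld i l : l \in Fv i -> e i * fld i l === fld i l.
Proof. by move=> Fl; rewrite -sp_fldM ?mem1v ?mul1r. Qed.

Lemma sp_fld_idem i l : l \in Fv i -> fld i l * e i === fld i l.
Proof. by move=> Fl; rewrite -sp_fldM ?mem1v ?mulr1. Qed.

End SpeciesRelations.

Lemma sp_fld_gen (F : fieldType) (E : fieldExtType F) (V : finType) (Ar : choiceType)
    (Fv : V -> {subfield E}) (x : vgen Fv) :
  fgen F (inl x : spgen Ar Fv) = sp_fld Fv (val x).1 (val x).2.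
Proof. by rewrite /sp_fld; case: x => [[i l] Fl] /=; rewrite insubT. Qed.

Section QuadraticExtension.
Variables (F : fieldType) (E : fieldExtType F) (K : {subfield E}) (v : E).

Lemma adjoin_degree_sqr_le2 : v ^+ 2 \in K -> (adjoin_degree K v <= 2)%N.
Proof.
move=> v2K; have p_neq0 : 'X^2 - (v ^+ 2)%:P != 0 :> {poly E}.
  by rewrite -size_poly_eq0 size_XnsubC.
have minPv : minPoly K v %| 'X^2 - (v ^+ 2)%:P.
  apply: minPoly_dvdp; last by rewrite rootE !hornerE subrr.
  by rewrite rpredB ?rpredX ?polyOverX ?polyOverC.
by have := dvdp_leq p_neq0 minPv; rewrite size_minPoly size_XnsubC.
Qed.

Lemma Fadjoin_deg2_decomp x : (adjoin_degree K v <= 2)%N -> x \in <<K; v>>%VS ->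
  exists a b, [/\ a \in K, b \in K & x = a + b * v].
Proof.
move=> deg_v Kvx; have Kp := Fadjoin_polyOver K v x.
have size_p := leq_trans (size_Fadjoin_poly K v x) deg_v.
exists (Fadjoin_poly K v x)`_0, (Fadjoin_poly K v x)`_1; split; try exact: polyOverP.
rewrite -{1}(Fadjoin_poly_eq Kvx) (horner_coef_wide v size_p).
by rewrite !big_ord_recl big_ord0 expr0 expr1 mulr1 addr0.
Qed.

Lemma adjoin_degree_gt1 : v \notin K -> (1 < adjoin_degree K v)%N.
Proof. by rewrite -adjoin_deg_eq1 /adjoin_degree; case: (_.-1). Qed.

Lemma Fadjoin_eq_fullv : (\dim {:E} <= adjoin_degree K v * \dim K)%N -> <<K; v>>%VS = fullv.
Proof. by move=> dimE; apply/eqP; rewrite eqEdim subvf dim_Fadjoin. Qed.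

End QuadraticExtension.

Lemma hat_arr_val (a : 'I_3) : (inord a : 'I_4) = a :> nat.
Proof. by rewrite inordK // (ltn_trans (ltn_ord a)). Qed.

Lemma hat_arr_ends (a : 'I_3) :
  Qh_hd (inord a) = Q_hd a /\ Qh_tl (inord a) = Q_tl a.
Proof. by rewrite /Qh_hd /Qh_tl /= hat_arr_val; case: a => [[|[|[|]]] ?]. Qed.

Lemma hat_arrK (b : 'I_4) : (b < 3)%N -> inord (inord b : 'I_3) = b.
Proof. by move=> b3; apply: val_inj; rewrite /= hat_arr_val inordK. Qed.

Lemma Qh_arr_ge3 (b : 'I_4) : ~~ (b < 3)%N -> b = Qh_s1.
Proof.
by move=> b3; apply: val_inj; rewrite /Qh_s1 /= inordK //; case: b b3 => [[|[|[|[|]]]] ?].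
Qed.

Lemma hat_arr_paths : [/\ inord Q_alpha = Qh_alpha, inord Q_beta = Qh_beta
  & inord Q_gamma = Qh_gamma].
Proof. by split; apply: val_inj; rewrite /= hat_arr_val /= !inordK. Qed.

Lemma Qh_paths_lt3 : [/\ (Qh_alpha < 3)%N, (Qh_beta < 3)%N & (Qh_gamma < 3)%N].
Proof. by rewrite /Qh_alpha /Qh_beta /Qh_gamma !inordK. Qed.

Lemma inord_Qh_paths : [/\ inord Qh_alpha = Q_alpha, inord Qh_beta = Q_beta
  & inord Qh_gamma = Q_gamma].
Proof. by split; apply: val_inj; rewrite /= !inordK. Qed.

Lemma Qh_s1_ends : Qh_hd Qh_s1 = vx1 /\ Qh_tl Qh_s1 = vx1.
Proof. by rewrite /Qh_hd /Qh_tl /Qh_s1 /= inordK. Qed.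

Lemma Qh_s1_ge3 : (Qh_s1 < 3)%N = false.
Proof. by rewrite /Qh_s1 inordK. Qed.

Lemma vx2_neq1 : vx2 != vx1. Proof. by rewrite -(inj_eq val_inj) /= !inordK. Qed.
Lemma vx3_neq1 : vx3 != vx1. Proof. by rewrite -(inj_eq val_inj) /= !inordK. Qed.

Section LoopPresentation.
Variables (F : fieldType) (E : fieldExtType F) (K : {subfield E}) (v : E).
Hypotheses (v2K : v ^+ 2 \in K) (vNK : v \notin K) (Kv_full : <<K; v>>%VS = fullv).

Lemma coord_exists x : exists ab : E * E, [&& ab.1 \in K, ab.2 \in K & x == ab.1 + ab.2 * v].
Proof.
have [|a [b [Ka Kb ->]]] := Fadjoin_deg2_decomp (x := x) (adjoin_degree_sqr_le2 v2K).
  by rewrite Kv_full memvf.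
by exists (a, b); rewrite /= Ka Kb eqxx.
Qed.

Definition coordK x := (xchoose (coord_exists x)).1.
Definition coordv x := (xchoose (coord_exists x)).2.

Lemma coordK_mem x : coordK x \in K.
Proof. by have /and3P[] := xchooseP (coord_exists x). Qed.

Lemma coordv_mem x : coordv x \in K.
Proof. by have /and3P[] := xchooseP (coord_exists x). Qed.

Lemma coordE x : x = coordK x + coordv x * v.
Proof. by have /and3P[_ _ /eqP] := xchooseP (coord_exists x). Qed.

Lemma coord_inj a b a' b' : a \in K -> b \in K -> a' \in K -> b' \in K ->
  a + b * v = a' + b' * v -> a = a' /\ b = b'.
Proof.
move=> Ka Kb Ka' Kb' eq_ab; suff eq_b : b = b' by move: eq_ab; rewrite eq_b => /addIr.
apply/eqP; apply: contraR vNK => neq_b.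
have -> : v = (a' - a) / (b - b').
  apply: (canRL (mulfK _)); first by rewrite subr_eq0.
  by rewrite -[a' in RHS](addrK (b' * v)) -eq_ab; ring.
by rewrite rpred_div ?rpredB.
Qed.

Lemma coord_lin a b : a \in K -> b \in K ->
  coordK (a + b * v) = a /\ coordv (a + b * v) = b.
Proof. by move=> Ka Kb; apply: coord_inj; rewrite ?coordK_mem ?coordv_mem -?coordE. Qed.

Lemma coord_mem z : z \in K -> coordK z = z /\ coordv z = 0.
Proof. by move=> Kz; have := coord_lin Kz (mem0v K); rewrite mul0r addr0. Qed.

Lemma coord_gen : coordK v = 0 /\ coordv v = 1.
Proof. by have := coord_lin (mem0v K) (mem1v K); rewrite add0r mul1r. Qed.

Lemma coordD x y :
  coordK (x + y) = coordK x + coordK y /\ coordv (x + y) = coordv x + coordv y.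
Proof.
have := coord_lin (rpredD (coordK_mem x) (coordK_mem y)) (rpredD (coordv_mem x) (coordv_mem y)).
by rewrite mulrDl addrACA -!coordE.
Qed.

Lemma coordM x y :
  coordK (x * y) = coordK x * coordK y + coordv x * coordv y * v ^+ 2 /\
  coordv (x * y) = coordK x * coordv y + coordv x * coordK y.
Proof.
have Kxa := coordK_mem x; have Kxb := coordv_mem x.
have Kya := coordK_mem y; have Kyb := coordv_mem y.
have := coord_lin (rpredD (rpredM Kxa Kya) (rpredM (rpredM Kxb Kyb) v2K))
                  (rpredD (rpredM Kxa Kyb) (rpredM Kxb Kya)).
have -> // : coordK x * coordK y + coordv x * coordv y * v ^+ 2 +
    (coordK x * coordv y + coordv x * coordK y) * v = x * y.
by rewrite [x in RHS]coordE [y in RHS]coordE; ring.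
Qed.

Section LoopIsomorphism.
Variables (tw : 'I_3 -> E -> E) (twK : 'I_4 -> E -> E).
Hypothesis tw_mem : forall a z, z \in K -> tw a z \in K.
Hypothesis twK_arr : forall (a : 'I_3) z, z \in K -> twK (inord a) z = tw a z.
Hypothesis twK_loop : forall z, z \in K -> twK Qh_s1 z = z.

Definition FvE (i : 'I_3) : {subfield E} := if i == vx1 then {:E}%AS else K.
Definition FvK (i : 'I_3) : {subfield E} := K.

Local Notation A := (spalg 'I_3 FvE).
Local Notation B := (spalg 'I_4 FvK).
Definition RA := pres_rel FvE Q_hd Q_tl tw (Q_paths FvE).
Definition RB := pres_rel FvK Qh_hd Qh_tl twK (Qh_rels FvK (v ^+ 2)).
Local Notation "x =A= y" := (eqv_mod RA x y) (at level 70).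
Local Notation "x =B= y" := (eqv_mod RB x y) (at level 70).
Local Notation s1 := (sp_arr FvK Qh_s1).
Local Notation fb := (sp_fld FvK vx1).
Local Notation fa := (sp_fld FvE vx1).

Lemma FvE_mem i l : l \in K -> l \in FvE i.
Proof. by rewrite /FvE; case: ifP => // _; rewrite memvf. Qed.

Lemma FvE1 l : l \in FvE vx1.
Proof. by rewrite /FvE eqxx memvf. Qed.

Lemma FvE_neq1 i : i != vx1 -> FvE i = K.
Proof. by rewrite /FvE => /negbTE ->. Qed.

Lemma FvE_arr_cap a z : z \in (FvE (Q_hd a) :&: FvE (Q_tl a))%VS -> z \in K.
Proof.
case/memv_capP; rewrite /Q_hd /Q_tl.
by case: a => [[|[|[|]]] ?] //=; rewrite ?(FvE_neq1 vx2_neq1) ?(FvE_neq1 vx3_neq1).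
Qed.

Lemma FvK_fldD i l m : l \in K -> m \in K ->
  sp_fld FvK i (l + m) =B= sp_fld FvK i l + sp_fld FvK i m.
Proof. exact: sp_fldD. Qed.

Lemma FvK_fldM i l m : l \in K -> m \in K ->
  sp_fld FvK i (l * m) =B= sp_fld FvK i l * sp_fld FvK i m.
Proof. exact: sp_fldM. Qed.

Lemma loop_comm z : z \in K -> s1 * fb z =B= fb z * s1.
Proof.
move=> Kz; have [hd1 tl1] := Qh_s1_ends.
have := sp_arr_twist (hd := Qh_hd) (tl := Qh_tl) twK (Qh_rels FvK (v ^+ 2))
  (a := Qh_s1) (z := z).
by rewrite hd1 tl1 (twK_loop Kz); apply; rewrite memv_cap Kz.
Qed.

Lemma loop_sqr : s1 * s1 =B= fb (v ^+ 2).
Proof. by apply: ideal_genS; right; do 3 right. Qed.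

Lemma idem_loop : fb 1 * s1 =B= s1.
Proof.
have [hd1 tl1] := Qh_s1_ends.
have s1E : s1 =B= sp_e FvK vx1 * s1 * sp_e FvK vx1.
  by have := sp_arr_idem Qh_hd Qh_tl twK (Qh_rels FvK (v ^+ 2)) Qh_s1; rewrite hd1 tl1.
by rewrite {1}s1E !mulrA sp_idemM -s1E.
Qed.

Definition vertex_image (i : 'I_3) (l : E) : B :=
  if i == vx1 then fb (coordK l) + fb (coordv l) * s1 else sp_fld FvK i l.

Lemma vertex_image_mem i z : z \in K -> vertex_image i z =B= sp_fld FvK i z.
Proof.
rewrite /vertex_image => Kz; case: eqP => [->|_] //.
by have [-> ->] := coord_mem Kz; rewrite sp_fld0 mul0r addr0.
Qed.

Lemma vertex_imageD i l m : l \in FvE i -> m \in FvE i ->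
  vertex_image i (l + m) =B= vertex_image i l + vertex_image i m.
Proof.
rewrite /vertex_image; case: eqP => [_ _ _|/eqP i1]; last first.
  by rewrite (FvE_neq1 i1) => Kl Km; rewrite FvK_fldD.
have [-> ->] := coordD l m.
by rewrite !FvK_fldD ?coordK_mem ?coordv_mem // mulrDl addrACA.
Qed.

Lemma vertex_imageM i l m : l \in FvE i -> m \in FvE i ->
  vertex_image i (l * m) =B= vertex_image i l * vertex_image i m.
Proof.
rewrite /vertex_image; case: eqP => [_ _ _|/eqP i1]; last first.
  by rewrite (FvE_neq1 i1) => Kl Km; rewrite FvK_fldM.
have [-> ->] := coordM l m.
move: (coordK_mem l) (coordv_mem l) (coordK_mem m) (coordv_mem m).
move: (coordK l) (coordv l) (coordK m) (coordv m) => a b c d Ka Kb Kc Kd.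
have Kbd := rpredM Kb Kd; have Kbdw := rpredM Kbd v2K.
have Kac := rpredM Ka Kc; have Kad := rpredM Ka Kd; have Kbc := rpredM Kb Kc.
rewrite !FvK_fldD // (FvK_fldM _ Kbd v2K).
rewrite (FvK_fldM _ Ka Kc) (FvK_fldM _ Kb Kd) (FvK_fldM _ Ka Kd) (FvK_fldM _ Kb Kc).
by symmetry; apply: eqv_mod_sqr_mul; rewrite ?loop_comm ?loop_sqr.
Qed.

Definition to_loop_gen (g : spgen 'I_3 FvE) : B :=
  match g with
  | inl x => vertex_image (val x).1 (val x).2
  | inr a => sp_arr FvK (inord a)
  end.

Definition from_loop_gen (g : spgen 'I_4 FvK) : A :=
  match g with
  | inl x => sp_fld FvE (val x).1 (val x).2
  | inr b => if (b < 3)%N then sp_arr FvE (inord b) else fa v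
  end.

Definition to_loop : {lrmorphism A -> B} := freealg_lift to_loop_gen.
Definition from_loop : {lrmorphism B -> A} := freealg_lift from_loop_gen.

Lemma to_loopD : {morph to_loop : x y / x + y}. Proof. exact: rmorphD. Qed.
Lemma to_loopM : {morph to_loop : x y / x * y}. Proof. exact: rmorphM. Qed.
Lemma from_loopD : {morph from_loop : x y / x + y}. Proof. exact: rmorphD. Qed.
Lemma from_loopM : {morph from_loop : x y / x * y}. Proof. exact: rmorphM. Qed.

Lemma to_loop_fld i l :
  to_loop (sp_fld FvE i l) = if l \in FvE i then vertex_image i l else 0.
Proof.
rewrite /sp_fld; case: insubP => [x Fx xE | /negbTE ->] /=; last exact: raddf0.
by rewrite freealg_lift_gen /= xE Fx.
Qed.

Lemma to_loop_e i : to_loop (sp_e FvE i) = vertex_image i 1.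
Proof. by rewrite /sp_e to_loop_fld mem1v. Qed.

Lemma to_loop_arr a : to_loop (sp_arr FvE a) = sp_arr FvK (inord a).
Proof. exact: freealg_lift_gen. Qed.

Lemma from_loop_fld i l :
  from_loop (sp_fld FvK i l) = if l \in K then sp_fld FvE i l else 0.
Proof.
rewrite /sp_fld; case: insubP => [x Kx xE | /negbTE ->] /=; last exact: raddf0.
by rewrite freealg_lift_gen /= xE Kx.
Qed.

Lemma from_loop_e i : from_loop (sp_e FvK i) = sp_e FvE i.
Proof. by rewrite /sp_e from_loop_fld mem1v. Qed.

Lemma from_loop_arr b :
  from_loop (sp_arr FvK b) = if (b < 3)%N then sp_arr FvE (inord b) else fa v.
Proof. exact: freealg_lift_gen. Qed.

Lemma to_loop_species r : species_rel FvE Q_hd Q_tl tw r -> ideal_gen RB (to_loop r).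
Proof.
have eqvB x y : to_loop x =B= to_loop y -> ideal_gen RB (to_loop (x - y)).
  by rewrite (raddfB to_loop) /=.
case=> [[i [l [m [Fl Fm ->]]]] | [[i [l [m [Fl Fm ->]]]] | [[i [c ->]] | [-> |
        [[i [j [ij ->]]] | [[a ->] | [a [z [Fz ->]]]]]]]]]; try apply: eqvB.
- by rewrite to_loopD !to_loop_fld (rpredD Fl Fm) Fl Fm; apply: vertex_imageD.
- by rewrite to_loopM !to_loop_fld (rpredM Fl Fm) Fl Fm; apply: vertex_imageM.
- have Kc : c%:A \in K by rewrite rpredZ ?mem1v.
  rewrite linearZ /= to_loop_e to_loop_fld FvE_mem //.
  by rewrite !vertex_image_mem ?mem1v //; apply: sp_fld_alg.
- rewrite (rmorph_sum to_loop) (rmorph1 to_loop) /=.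
  transitivity (\sum_i sp_e FvK i : B); last exact: sp_sum_idem.
  by apply: eqv_mod_sum => i _; rewrite to_loop_e vertex_image_mem ?mem1v.
- apply/eqv_mod0; rewrite to_loopM !to_loop_e !vertex_image_mem ?mem1v //.
  exact: sp_idem_orth.
- rewrite 2!to_loopM !to_loop_e to_loop_arr !vertex_image_mem ?mem1v //.
  by have [<- <-] := hat_arr_ends a; apply: sp_arr_idem.
- have Kz := FvE_arr_cap Fz.
  have Ktwz := tw_mem a Kz.
  rewrite [eqvLHS]to_loopM [eqvRHS]to_loopM !to_loop_arr !to_loop_fld.
  rewrite (FvE_mem _ Kz) (FvE_mem _ Ktwz) (vertex_image_mem _ Kz) (vertex_image_mem _ Ktwz).
  rewrite -(twK_arr a Kz).
  by have [<- <-] := hat_arr_ends a; apply: sp_arr_twist; rewrite memv_cap Kz.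
Qed.

Lemma to_loop_paths r : Q_paths FvE r -> ideal_gen RB (to_loop r).
Proof.
have [hatA hatB hatC] := hat_arr_paths.
case=> [|[|]] ->; rewrite to_loopM !to_loop_arr; apply: ideal_genS; right.
- by rewrite hatA hatB; left.
- by rewrite hatB hatC; right; left.
- by rewrite hatC hatA; do 2 right; left.
Qed.

Lemma from_loop_species r : species_rel FvK Qh_hd Qh_tl twK r -> ideal_gen RA (from_loop r).
Proof.
have eqvB x y : from_loop x =A= from_loop y -> ideal_gen RA (from_loop (x - y)).
  by rewrite (raddfB from_loop).
case=> [[i [l [m [Kl Km ->]]]] | [[i [l [m [Kl Km ->]]]] | [[i [c ->]] | [-> |
        [[i [j [ij ->]]] | [[b ->] | [b [z [Kcap_z ->]]]]]]]]]; try apply: eqvB.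
- rewrite from_loopD !from_loop_fld (rpredD Kl Km) Kl Km.
  by apply: sp_fldD; apply: FvE_mem.
- rewrite from_loopM !from_loop_fld (rpredM Kl Km) Kl Km.
  by apply: sp_fldM; apply: FvE_mem.
- have Kc : c%:A \in K by rewrite rpredZ ?mem1v.
  by rewrite linearZ /= from_loop_e from_loop_fld Kc; apply: sp_fld_alg.
- rewrite (rmorph_sum from_loop) (rmorph1 from_loop) /=.
  transitivity (\sum_i sp_e FvE i : A); last exact: sp_sum_idem.
  by apply: eqv_mod_sum => i _; rewrite from_loop_e.
- by apply/eqv_mod0; rewrite from_loopM !from_loop_e; apply: sp_idem_orth.
- rewrite !from_loopM !from_loop_e from_loop_arr.
  have [b3|/Qh_arr_ge3 ->] := boolP (b < 3)%N.
    by have [] := hat_arr_ends (inord b); rewrite (hat_arrK b3) => -> ->; apply: sp_arr_idem.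
  have [-> ->] := Qh_s1_ends.
  by rewrite [in eqvRHS]sp_idem_fld ?FvE1 // [eqvRHS]sp_fld_idem ?FvE1.
- have /memv_capP[Kz _] := Kcap_z.
  rewrite [eqvLHS]from_loopM [eqvRHS]from_loopM !from_loop_arr.
  have [b3|/Qh_arr_ge3 ->] := boolP (b < 3)%N.
    have [] := hat_arr_ends (inord b); rewrite (hat_arrK b3) => -> ->.
    have Ktwz := tw_mem (inord b) Kz.
    rewrite -[in twK b z](hat_arrK b3) (twK_arr _ Kz) !from_loop_fld Kz Ktwz.
    by apply: sp_arr_twist; rewrite memv_cap !FvE_mem.
  have [-> ->] := Qh_s1_ends; rewrite (twK_loop Kz) !from_loop_fld Kz.
  rewrite -(sp_fldM _ _ _ _ (FvE1 v) (FvE1 z)) -(sp_fldM _ _ _ _ (FvE1 z) (FvE1 v)).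
  by rewrite mulrC.
Qed.

Lemma from_loop_paths r : Qh_rels FvK (v ^+ 2) r -> ideal_gen RA (from_loop r).
Proof.
have [ltA ltB ltC] := Qh_paths_lt3; have [eA eB eC] := inord_Qh_paths.
case=> [|[|[|]]] ->.
- rewrite from_loopM !from_loop_arr ltA ltB eA eB.
  by apply: ideal_genS; right; left.
- rewrite from_loopM !from_loop_arr ltB ltC eB eC.
  by apply: ideal_genS; right; right; left.
- rewrite from_loopM !from_loop_arr ltC ltA eC eA.
  by apply: ideal_genS; right; do 2 right.
- rewrite (raddfB from_loop) /= from_loopM from_loop_arr Qh_s1_ge3 from_loop_fld v2K.
  suff : fa v * fa v =A= fa (v ^+ 2) by [].
  by symmetry; apply: sp_fldM; apply: FvE1.
Qed.

Lemma from_to_loop_gen g : from_loop (to_loop (fgen F g)) =A= fgen F g.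
Proof.
case: g => [x | a]; last first.
  change (from_loop (to_loop (sp_arr FvE a)) =A= sp_arr FvE a).
  by rewrite to_loop_arr from_loop_arr hat_arr_val ltn_ord inord_val.
rewrite !sp_fld_gen; case: x => [[i l] /= Fl]; rewrite to_loop_fld Fl /vertex_image.
case: eqP Fl => [-> _ | /eqP i1]; last first.
  by rewrite (FvE_neq1 i1) => Kl; rewrite from_loop_fld Kl.
rewrite from_loopD from_loopM !from_loop_fld coordK_mem coordv_mem from_loop_arr Qh_s1_ge3.
rewrite [in eqvRHS](coordE l) (sp_fldD _ _ _ _ (FvE1 _) (FvE1 _)).
by rewrite (sp_fldM _ _ _ _ (FvE1 _) (FvE1 v)).
Qed.

Lemma to_from_loop_gen g : to_loop (from_loop (fgen F g)) =B= fgen F g.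
Proof.
case: g => [x | b].
  rewrite !sp_fld_gen; case: x => [[i l] /= Kl].
  by rewrite from_loop_fld Kl to_loop_fld (FvE_mem _ Kl) (vertex_image_mem _ Kl).
change (to_loop (from_loop (sp_arr FvK b)) =B= sp_arr FvK b); rewrite from_loop_arr.
have [b3|/Qh_arr_ge3 ->] := boolP (b < 3)%N; first by rewrite to_loop_arr (hat_arrK b3).
rewrite to_loop_fld FvE1 /vertex_image eqxx; have [-> ->] := coord_gen.
by rewrite sp_fld0 add0r idem_loop.
Qed.

Theorem loop_presentation_iso : quot_alg_iso RA RB.
Proof.
exists to_loop, from_loop; split.
- by apply: ideal_gen_rmorph => r [/to_loop_species | /to_loop_paths].
- by apply: ideal_gen_rmorph => r [/from_loop_species | /from_loop_paths].
- exact: (eqv_mod_freealg_id (h := from_loop \o to_loop) from_to_loop_gen).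
- exact: (eqv_mod_freealg_id (h := to_loop \o from_loop) to_from_loop_gen).
Qed.

End LoopIsomorphism.
End LoopPresentation.

Lemma eqNr_lmod (F : fieldType) (V : lmodType F) (x : V) :
  (2%:R : F) != 0 -> (- x == x) = (x == 0).
Proof.
move=> two_neq0; rewrite eq_sym -subr_eq0 opprK -mulr2n -scaler_nat.
by rewrite scaler_eq0 (negbTE two_neq0).
Qed.

Section GaloisSigns.
Variables (F : fieldType) (L : splittingFieldType F).
Implicit Types (s : gal_of {:L}) (x y : L).

Lemma gal_fix1 s : {in 1%VS, forall y, s y = y}.
Proof. by move=> _ /vlineP[k ->]; apply: rmorph_alg. Qed.

Lemma gal_horner s p x : p \is a polyOver 1%VS -> s p.[x] = p.[s x].
Proof.
move=> F1p; rewrite -horner_map; congr _.[_]; apply/polyP => i.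
by rewrite coef_map /= gal_fix1 //; apply: (polyOverP F1p).
Qed.

Lemma gal_fix_adjoin1 s x : s x = x -> {in <<1; x>>%AS, forall y, s y = y}.
Proof. by move=> sx _ /Fadjoin_polyP[p F1p ->]; rewrite gal_horner // sx. Qed.

Lemma gal_adjoin1_stable s x :
  s x \in <<1; x>>%AS -> {in <<1; x>>%AS, forall y, s y \in <<1; x>>%AS}.
Proof.
move=> sx _ /Fadjoin_polyP[p F1p ->]; rewrite gal_horner //.
by apply: rpred_horner => //; apply: polyOverS F1p => y; apply: subvP; apply: sub1v.
Qed.

Lemma galXSr s n y : (s ^+ n.+1)%g y = s ((s ^+ n)%g y).
Proof. by rewrite expgSr galM ?memvf. Qed.

Lemma gal_anti_notin (K : {subfield L}) s x : (2%:R : F) != 0 ->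
  {in K, forall y, s y = y} -> x != 0 -> s x = - x -> x \notin K.
Proof.
move=> two_neq0 sK x_neq0 sx; apply: contra x_neq0 => /sK /eqP.
by rewrite sx eqNr_lmod.
Qed.

End GaloisSigns.

Lemma prim_root4_sqr (R : idomainType) (z : R) : 4.-primitive_root z -> z ^+ 2 = -1.
Proof.
move=> z4; have z2_neq1 : z ^+ 2 != 1.
  by have := eq_prim_root_expr z4 2 0; rewrite expr0 => ->.
have /eqP : (z ^+ 2 - 1) * (z ^+ 2 + 1) = 0.
  by rewrite -subr_sqr -exprM prim_expr_order // expr1n subrr.
by rewrite mulf_eq0 subr_eq0 (negbTE z2_neq1) addr_eq0 => /eqP.
Qed.

Lemma cyclic4_quadratic (F : fieldType) (E : splittingFieldType F) (rho : gal_of {:E})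
    (zeta : F) (v : E) :
    \dim {:E} = 4%N -> 4.-primitive_root zeta -> v != 0 -> rho v = zeta%:A * v ->
  let L := <<1; v ^+ 2>>%AS in
  [/\ v ^+ 2 \in L, v \notin L, <<L; v>>%VS = fullv
    & forall n, {in L, forall z, (rho ^+ n)%g z \in L}].
Proof.
move=> dimE zeta4 v_neq0 rho_v L.
have zetaA2 : (zeta%:A : E) ^+ 2 = -1.
  by rewrite -(rmorphXn (in_alg E)) /= prim_root4_sqr // scaleN1r.
have two_neq0 : (2%:R : F) != 0.
  apply/eqP => two0; have := eq_prim_root_expr zeta4 2 0.
  by rewrite prim_root4_sqr // expr0 eq_sym -addr_eq0 -[1 + 1]/(2%:R) two0 eqxx.
have rho_u : rho (v ^+ 2) = - v ^+ 2 by rewrite rmorphXn /= rho_v exprMn zetaA2 mulN1r.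
have rho2_v : (rho ^+ 2)%g v = - v.
  by rewrite galXSr expg1 rho_v rmorphM /= rmorph_alg rho_v mulrA -expr2 zetaA2 mulN1r.
have rho2_u : (rho ^+ 2)%g (v ^+ 2) = v ^+ 2 by rewrite galXSr expg1 rho_u rmorphN /= rho_u opprK.
have uN1 := gal_anti_notin two_neq0 (gal_fix1 rho) (expf_neq0 2 v_neq0) rho_u.
have vNL := gal_anti_notin two_neq0 (gal_fix_adjoin1 rho2_u) v_neq0 rho2_v.
split=> //; first exact: memv_adjoin.
  apply: Fadjoin_eq_fullv; rewrite dimE /L dim_Fadjoin dimv1 muln1.
  exact: (leq_mul (adjoin_degree_gt1 vNL) (adjoin_degree_gt1 uN1)).
elim=> [|n IH] z Lz; first by rewrite expg0 gal_id.
rewrite galXSr; apply: (gal_adjoin1_stable _ (IH z Lz)).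
by rewrite rho_u rpredN memv_adjoin.
Qed.

Lemma gal_anti_quadratic (F : fieldType) (L : splittingFieldType F) (theta : gal_of {:L}) (u : L) :
    2 \notin [pchar F] -> \dim {:L} = 2%N -> u != 0 -> theta u = - u ->
  [/\ u ^+ 2 \in 1%AS, u \notin 1%AS & <<1; u>>%VS = fullv].
Proof.
move=> char2 dimL u_neq0 theta_u.
have two_neq0 : (2%:R : F) != 0 by apply: contra char2 => two0; rewrite inE /= two0.
have uN1 := gal_anti_notin two_neq0 (gal_fix1 theta) u_neq0 theta_u.
have deg_u : (adjoin_degree 1%AS u <= 2)%N.
  by have := dimvS (subvf <<1%AS; u>>%VS); rewrite dim_Fadjoin dimv1 muln1 dimL.
have u_full : <<1; u>>%VS = fullv.
  by apply: Fadjoin_eq_fullv; rewrite dimL dimv1 muln1 adjoin_degree_gt1.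
split=> //.
have [|a [b [F1a F1b u2E]]] := Fadjoin_deg2_decomp (x := u ^+ 2) deg_u.
  by rewrite u_full memvf.
have : theta (u ^+ 2) = a - b * u.
  by rewrite u2E rmorphD rmorphM /= (gal_fix1 _ F1a) (gal_fix1 _ F1b) theta_u mulrN.
rewrite rmorphXn /= theta_u sqrrN {1}u2E => /addrI /eqP.
rewrite eq_sym eqNr_lmod // mulf_eq0 (negbTE u_neq0) orbF => /eqP b0.
by rewrite u2E b0 mul0r addr0.
Qed.

Theorem proposition4p3 :
  (* (a) Block 3: degree-4 datum *)
  (forall (F : fieldType) (E : splittingFieldType F) (rho : gal_of {:E})
          (zeta : F) (v : E) (xa xb xc : 'Z_2),
      galois 1 {:E} -> \dim {:E} = 4%N ->
      ('Gal({:E} / 1) = <[rho]>)%g ->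
      4.-primitive_root zeta ->
      v != 0 -> rho v = zeta%:A * v ->
      xa + xb + xc = 0 ->
      let u := v ^+ 2 in
      let L : {subfield E} := <<1; u>>%AS in
      (* theta^xi acts on L as rho^xi *)
      let xi (a : 'I_3) : nat :=
        match val a with 0%N => xa | 1%N => xb | _ => xc end in
      (* Lambda' : F_1 = E, F_2 = F_3 = L, A_a twisted by theta^{xi_a} *)
      let Fv' (i : 'I_3) : {subfield E} := if i == vx1 then {:E}%AS else L in
      let tw' (a : 'I_3) (z : E) : E := (rho ^+ xi a)%g z in
      (* Lambda : K = L at every vertex, sigma_a = theta^{xi_a}, sigma_s1 = 1 *)
      let FvK (i : 'I_3) : {subfield E} := L in
      let twK (b : 'I_4) (z : E) : E :=
        match val b with
        | 0%N => (rho ^+ xa)%g z | 1%N => (rho ^+ xb)%g z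
        | 2%N => (rho ^+ xc)%g z | _ => z end in
      quot_alg_iso (pres_rel Fv' Q_hd Q_tl tw' (Q_paths Fv'))
                   (pres_rel FvK Qh_hd Qh_tl twK (Qh_rels FvK u)))
  /\
  (* (b) Block 9: degree-2 datum *)
  (forall (F : fieldType) (L : splittingFieldType F) (theta : gal_of {:L})
          (u : L),
      2 \notin [pchar F] -> \dim {:L} = 2%N ->
      theta \in 'Gal({:L} / 1)%g -> theta != 1%g ->
      u != 0 -> theta u = - u ->
      (* Lambda' : F_1 = L, F_2 = F_3 = F, no twists *)
      let Fv' (i : 'I_3) : {subfield L} := if i == vx1 then {:L}%AS else 1%AS in
      (* Lambda : K = F at every vertex, all sigma trivial *)
      let FvK (i : 'I_3) : {subfield L} := 1%AS in
      quot_alg_iso (pres_rel Fv' Q_hd Q_tl (fun _ z => z) (Q_paths Fv'))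
                   (pres_rel FvK Qh_hd Qh_tl (fun _ z => z) (Qh_rels FvK (u ^+ 2)))).
Proof.
split=> [F E rho zeta v xa xb xc _ dimE _ zeta4 v_neq0 rho_v _ u L xi Fv' tw' FvK twK
        | F L theta u char2 dimL _ _ u_neq0 theta_u Fv' FvK].
- have [v2L vNL Lv_full rhoL] := cyclic4_quadratic dimE zeta4 v_neq0 rho_v.
  apply: (loop_presentation_iso v2L vNL Lv_full (tw := tw') (twK := twK)).
  + by move=> a z Lz; apply: rhoL.
  + by move=> a z _; rewrite /twK /tw' /xi /= hat_arr_val; case: a => [[|[|[|]]] ?].
  + by move=> z _; rewrite /twK /Qh_s1 /= inordK.
- have [u2K uNK u_full] := gal_anti_quadratic char2 dimL u_neq0 theta_u.
  exact: (loop_presentation_iso u2K uNK u_full (tw := fun _ z => z) (twK := fun _ z => z)).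
Qed.
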